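(* If there is an $n$-vertex weighted graph $G=(V,w)$ with $\widetilde{\mathrm{cdim}}(G)=k$, then $D_{\mathrm{lin}}(\mathrm{MINCUT}_n)\ge k$.
   Context: An $n$-vertex weighted graph $G=(V,w)$ is given by $w\in\mathbb{R}_{\ge0}^{\binom n2}$ (weights on unordered pairs of distinct vertices). For $\emptyset\neq X\subsetneq V$, let $S_X\in\{0,1\}^{\binom n2}$ be the indicator vector of the pairs with exactly one endpoint in $X$; the cut weight is $\langle S_X,w\rangle$, and $c^*$ denotes the minimum cut weight. For $Y\in\mathbb{R}^{M\times N}$, $w\in\mathbb{R}^N$ and $c\in\mathbb{R}^M$, the $(w,c)$ one-sided row-by-row $\ell_1$-approximate rank of $Y$ is the minimum rank of a matrix $\tilde Y\in\mathbb{R}^{M\times N}$ with $\tilde Y\le Y$ entrywise and $\sum_j |w(j)(Y(i,j)-\tilde Y(i,j))|\le c(i)$ for every row $i$. Let $M_G$ be the $(2^{n-1}-1)\times\binom n2$ matrix whose rows are the vectors $S_X$ over all $2^{n-1}-1$ unordered bipartitions $\{X,V\setminus X\}$ of $V$ into nonempty parts, and let $c=M_G w-c^*\mathbf{1}$. The $\ell_1$-approximate cut dimension $\widetilde{\mathrm{cdim}}(G)$ is the $(w,c)$ one-sided row-by-row $\ell_1$-approximate rank of $M_G$. In $\mathrm{MINCUT}_n$ the input is an $n$-vertex weighted graph and the output is its minimum cut weight; a linear query $x\in\mathbb{R}^{\binom n2}$ is answered by $\langle x,w\rangle$ (adaptively). $D_{\mathrm{lin}}(\mathrm{MINCUT}_n)$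 is the minimum over deterministic linear query algorithms correct on all $n$-vertex weighted graphs of the worst-case number of queries. *)

From mathcomp Require Import all_boot all_order all_algebra.
From mathcomp Require Import reals.
Set Implicit Arguments. Unset Strict Implicit. Unset Printing Implicit Defensive.
Import Order.TTheory GRing.Theory Num.Theory.
Local Open Scope ring_scope.

(* Vertex set V = 'I_n.  Unordered pairs of distinct vertices {i,j} are
   represented as ordered pairs (i,j) with i < j. *)
Definition pairT (n : nat) := {p : 'I_n * 'I_n | (p.1 < p.2)%N}.

(* Unordered bipartitions {X, V \ X} into nonempty parts: represented by the
   unique part X NOT containing vertex 0 (X nonempty; then V \ X contains 0,
   so it is nonempty too). *)
Definition cutT (n : nat) :=
  {X : {set 'I_n} | (X != set0) && [forall i : 'I_n, (val i == 0%N) ==> (i \notin X)]}.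

Section Defs.
Variable R : realType.
Variable n : nat.

Definition cutvec (X : {set 'I_n}) (e : pairT n) : R :=
  ((((val e).1 \in X) != ((val e).2 \in X)) : bool)%:R.

Definition cutw (w : {ffun pairT n -> R}) (X : {set 'I_n}) : R :=
  \sum_e cutvec X e * w e.

(* c^* : minimum cut weight over all bipartitions (the default value, the
   total weight, is an upper bound on every cut weight, so it is the true
   minimum whenever a bipartition exists, i.e. n >= 2). *)
Definition mincut (w : {ffun pairT n -> R}) : R :=
  \big[Order.min/ (\sum_e w e)]_(X : cutT n) cutw w (val X).

Definition MG : 'M[R]_(#|{: cutT n}|, #|{: pairT n}|) :=
  \matrix_(i, j) cutvec (val (enum_val i)) (enum_val j).

Definition wcol (w : {ffun pairT n -> R}) (j : 'I_#|{: pairT n}|) : R :=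
  w (enum_val j).
Definition crow (w : {ffun pairT n -> R}) (i : 'I_#|{: cutT n}|) : R :=
  cutw w (val (enum_val i)) - mincut w.

Definition one_sided_l1_approx (p q : nat) (Y Yt : 'M[R]_(p, q))
    (wc : 'I_q -> R) (c : 'I_p -> R) : Prop :=
  (forall i j, Yt i j <= Y i j) /\
  (forall i, \sum_j `|wc j * (Y i j - Yt i j)| <= c i).

Definition is_approx_rank (p q : nat) (Y : 'M[R]_(p, q))
    (wc : 'I_q -> R) (c : 'I_p -> R) (k : nat) : Prop :=
  (exists Yt, one_sided_l1_approx Y Yt wc c /\ \rank Yt = k) /\
  (forall Yt, one_sided_l1_approx Y Yt wc c -> (k <= \rank Yt)%N).

Definition approx_cdim_is (w : {ffun pairT n -> R}) (k : nat) : Prop :=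
  is_approx_rank MG (wcol w) (crow w) k.

(* Deterministic adaptive linear-query algorithms: given the history of
   answers so far, either stop with an output, or issue the next query
   x in R^(n choose 2), answered by <x, w>. *)
Record linAlg := LinAlg {
  la_out : seq R -> option R;
  la_query : seq R -> {ffun pairT n -> R} }.

Definition inner (x w : {ffun pairT n -> R}) : R := \sum_e x e * w e.

Fixpoint run (A : linAlg) (w : {ffun pairT n -> R}) (fuel : nat) (h : seq R)
  : option R :=
  match la_out A h with
  | Some v => Some v
  | None => match fuel with
            | 0 => None
            | f.+1 => run A w f (rcons h (inner (la_query A h) w))
            end
  end.

Definition solves_mincut_within (A : linAlg) (d : nat) : Prop :=
  forall w : {ffun pairT n -> R}, (forall e, 0 <= w e) ->
    run A w d [::] = Some (mincut w).

Definition Dlin_mincut_ge (k : nat) : Prop :=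
  forall (A : linAlg) (d : nat), solves_mincut_within A d -> (k <= d)%N.

End Defs.

(* Let A be a deterministic linear-query algorithm computing the minimum cut
   with at most d queries, and run it on the nonnegative input w; it asks
   t <= d queries q_0, ..., q_(t-1).  For every bipartition X, Farkas' lemma
   shows that S_X dominates entrywise a combination sum_l lam_X(l) q_l whose
   value on w is at least c*: otherwise the Farkas multipliers give a
   nonnegative w' answering every q_l as w does -- so A cannot tell w' from
   w and mincut w' = c* -- while some cut of w' weighs less than c*.  The
   matrix (lam_X(l))_(X,l) times the matrix of the q_l is then an admissible
   one-sided row-by-row l1-approximation of M_G of rank at most t, whence
   k <= t <= d. *)

From mathcomp Require Import all_boot all_order all_algebra.
From mathcomp Require Import reals.
From mathcomp Require Import boolp lra.
Import Order.TTheory GRing.Theory Num.Theory.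
Local Open Scope ring_scope.
Set Implicit Arguments. Unset Strict Implicit. Unset Printing Implicit Defensive.

Section Farkas.
Variable R : realFieldType.

(* A linear constraint (a, b) on unknowns x : nat -> R, read as
   \sum_j a j * x j <= b; only the first m unknowns are considered. *)
Definition cstr := ((nat -> R) * R)%type.

Definition sat (m : nat) (x : nat -> R) (c : cstr) : bool :=
  \sum_(j < m) c.1 j * x j <= c.2.

Inductive cone (I : Type) (c : I -> cstr) : (nat -> R) -> R -> Prop :=
| cone_base i : cone c (c i).1 (c i).2
| cone0 : cone c (fun _ => 0) 0
| cone_add a b a' b' : cone c a b -> cone c a' b' ->
    cone c (fun j => a j + a' j) (b + b')
| cone_scale t a b : 0 <= t -> cone c a b -> cone c (fun j => t * a j) (t * b)
| cone_ext a a' b : (forall j, a j = a' j) -> cone c a b -> cone c a' b.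

Lemma cone_trans (I J : Type) (c : I -> cstr) (c' : J -> cstr)
    (P : (nat -> R) -> Prop) :
  P (fun _ => 0) ->
  (forall a a', P a -> P a' -> P (fun j => a j + a' j)) ->
  (forall t a, P a -> P (fun j => t * a j)) ->
  (forall a a', (forall j, a j = a' j) -> P a -> P a') ->
  (forall k, cone c (c' k).1 (c' k).2 /\ P (c' k).1) ->
  forall a b, cone c' a b -> cone c a b /\ P a.
Proof.
move=> P0 PD PZ PE hb a b; elim.
- by move=> i; apply: hb.
- by split=> //; apply: cone0.
- move=> a1 b1 a2 b2 _ [h1 p1] _ [h2 p2]; split; [exact: cone_add | exact: PD].
- move=> t a1 b1 ht _ [h1 p1]; split; [exact: cone_scale | exact: PZ].
- move=> a1 a2 b1 e _ [h1 p1]; split; [exact: cone_ext e h1 | exact: PE e p1].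
Qed.

Lemma cone_multipliers (I : finType) (c : I -> cstr) a b : cone c a b ->
  exists mu : I -> R, [/\ forall i, 0 <= mu i,
    forall j, a j = \sum_i mu i * (c i).1 j & b = \sum_i mu i * (c i).2].
Proof.
have sum_delta i0 (F : I -> R) : \sum_i (i == i0)%:R * F i = F i0.
  by rewrite (bigD1 i0) //= eqxx mul1r big1 ?addr0 // => i /negPf->; rewrite mul0r.
elim=> [i0||a1 b1 a2 b2 _ [m1 [hm1 ha1 hb1]] _ [m2 [hm2 ha2 hb2]]
       |t a1 b1 ht _ [m1 [hm1 ha1 hb1]]|a1 a2 b1 e _ [m1 [hm1 ha1 hb1]]].
- by exists (fun i => (i == i0)%:R); split=> [i|j|]; rewrite ?sum_delta.
- by exists (fun _ => 0); split=> [//|j|]; rewrite big1 // => i _; rewrite mul0r.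
- exists (fun i => m1 i + m2 i); split=> [i|j|]; first exact: addr_ge0.
    by rewrite ha1 ha2 -big_split; apply: eq_bigr => i _; rewrite mulrDl.
  by rewrite hb1 hb2 -big_split; apply: eq_bigr => i _; rewrite mulrDl.
- exists (fun i => t * m1 i); split=> [i|j|]; first exact: mulr_ge0.
    by rewrite ha1 mulr_sumr; apply: eq_bigr => i _; rewrite mulrA.
  by rewrite hb1 mulr_sumr; apply: eq_bigr => i _; rewrite mulrA.
- by exists m1; split=> // j; rewrite -e.
Qed.

(* Fourier-Motzkin elimination of the unknown m: a positive combination of a
   constraint with positive and one with negative m-th coefficient. *)
Definition fm_combine (m : nat) (cp cq : cstr) : cstr :=
  (fun j => - cq.1 m * cp.1 j + cp.1 m * cq.1 j, - cq.1 m * cp.2 + cp.1 m * cq.2).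

Definition fm_elim (I : Type) (c : I -> cstr) (m : nat) (k : I + I * I) : cstr :=
  match k with
  | inl i => if (c i).1 m == 0 then c i else (fun _ => 0, 0)
  | inr (p, q) => if (0 < (c p).1 m) && ((c q).1 m < 0)
                  then fm_combine m (c p) (c q) else (fun _ => 0, 0)
  end.

Lemma fm_elim_cone (I : Type) (c : I -> cstr) m k :
  cone c (fm_elim c m k).1 (fm_elim c m k).2 /\ (fm_elim c m k).1 m = 0.
Proof.
case: k => [i|[p q]] /=.
  by case: eqP => [->|_]; split=> //; [apply: cone_base | apply: cone0].
case: ifP => [/andP[hp hq]|_] /=; last by split=> //; apply: cone0.
split; last by rewrite mulrC addrC mulrN subrr.
by apply: cone_add; apply: cone_scale; rewrite ?oppr_ge0 ?ltW //; apply: cone_base.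
Qed.

Definition fm_bound (m : nat) (x : nat -> R) (c : cstr) : R :=
  (c.2 - \sum_(j < m) c.1 j * x j) / c.1 m.

Definition extend (x : nat -> R) (m : nat) (v : R) : nat -> R :=
  fun j => if j == m then v else x j.

Lemma sat_extend m x v c :
  sat m.+1 (extend x m v) c = (\sum_(j < m) c.1 j * x j + c.1 m * v <= c.2).
Proof.
rewrite /sat big_ord_recr /= /extend eqxx; congr (_ + _ <= _).
by apply: eq_bigr => j _; rewrite ifN // neq_ltn ltn_ord.
Qed.

Lemma sat_extend_pos m x v c :
  0 < c.1 m -> sat m.+1 (extend x m v) c = (v <= fm_bound m x c).
Proof.
by move=> hc; rewrite sat_extend /fm_bound ler_pdivlMr //; apply/idP/idP; lra.
Qed.

Lemma sat_extend_neg m x v c :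
  c.1 m < 0 -> sat m.+1 (extend x m v) c = (fm_bound m x c <= v).
Proof.
by move=> hc; rewrite sat_extend /fm_bound ler_ndivrMr //; apply/idP/idP; lra.
Qed.

Lemma fm_combine_bound m x cp cq : 0 < cp.1 m -> cq.1 m < 0 ->
  sat m x (fm_combine m cp cq) -> fm_bound m x cq <= fm_bound m x cp.
Proof.
move=> hp hq; rewrite /sat /=.
rewrite (eq_bigr (fun j : 'I_m =>
  - cq.1 m * (cp.1 j * x j) + cp.1 m * (cq.1 j * x j))); last first.
  by move=> j _; rewrite mulrDl !mulrA.
rewrite big_split /= -!mulr_sumr => h.
rewrite /fm_bound ler_pdivlMr // mulrAC ler_ndivrMr //; nra.
Qed.

Lemma exists_between (I : finType) (lo up : pred I) (f : I -> R) :
  (forall p q, up p -> lo q -> f q <= f p) ->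
  exists v, (forall q, lo q -> f q <= v) /\ (forall p, up p -> v <= f p).
Proof.
move=> hpq; case: (pickP lo) => [q0 hq0|nolo].
  exists (\big[Order.max/f q0]_(q | lo q) f q); split=> [q hq|p hp].
    exact: le_bigmax_cond.
  by apply/bigmax_leP; split=> [|q hq]; apply: hpq.
case: (pickP up) => [p0 hp0|noup]; last first.
  by exists 0; split=> [q|p]; rewrite ?nolo ?noup.
exists (\big[Order.min/f p0]_(p | up p) f p); split=> [q|p hp].
  by rewrite nolo.
exact: bigmin_le_cond.
Qed.

Lemma fm_lift (I : finType) (c : I -> cstr) m x :
  (forall k, sat m x (fm_elim c m k)) ->
  exists v, forall i, sat m.+1 (extend x m v) (c i).
Proof.
move=> hx.
have pairwise p q : 0 < (c p).1 m -> (c q).1 m < 0 ->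
    fm_bound m x (c q) <= fm_bound m x (c p).
  move=> hp hq; apply: (fm_combine_bound hp hq).
  by have := hx (inr (p, q)); rewrite /= hp hq.
have [v [hlo hup]] := exists_between pairwise.
exists v => i; have [hneg|hpos|h0] := ltgtP ((c i).1 m) 0.
- by rewrite sat_extend_neg //; apply: hlo.
- by rewrite sat_extend_pos //; apply: hup.
- rewrite sat_extend h0 mul0r addr0.
  by have := hx (inl i); rewrite /= h0 eqxx.
Qed.

Lemma farkas_cone m : forall (I : finType) (c : I -> cstr),
  ~ (exists x, forall i, sat m x (c i)) ->
  exists a b, [/\ cone c a b, forall j, (j < m)%N -> a j = 0 & b < 0].
Proof.
elim: m => [|m IH] I c infeas.
  have : ~~ [forall i, sat 0 (fun _ => 0) (c i)].
    by apply/negP => /forallP h; apply: infeas; exists (fun _ => 0).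
  rewrite negb_forall => /existsP [i]; rewrite /sat big_ord0 -ltNge => hi.
  by exists (c i).1, (c i).2; split=> //; apply: cone_base.
have infeas' : ~ (exists x, forall k, sat m x (fm_elim c m k)).
  by case=> x /fm_lift [v hv]; apply: infeas; exists (extend x m v).
have [a [b [ha h0 hb]]] := IH _ _ infeas'.
have [hca ham] : cone c a b /\ a m = 0.
  apply: (cone_trans (P := fun a => a m = 0)) ha
    => // [a1 a2 -> ->|t a1 ->|a1 a2 e <-|k]; rewrite ?addr0 ?mulr0 ?e //.
  exact: fm_elim_cone.
exists a, b; split=> // j; rewrite ltnS leq_eqVlt => /orP[/eqP->//|]; exact: h0.
Qed.

Lemma farkas (I : finType) (c : I -> cstr) m :
  (exists x, forall i, sat m x (c i)) \/
  exists mu : I -> R, [/\ forall i, 0 <= mu i,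
    forall j, (j < m)%N -> \sum_i mu i * (c i).1 j = 0 &
    \sum_i mu i * (c i).2 < 0].
Proof.
case: (pselect (exists x, forall i, sat m x (c i))) => [|infeas]; first by left.
right; have [a [b [/cone_multipliers [mu [hmu ha hb]] h0 hb0]]] :=
  farkas_cone infeas.
by exists mu; split=> [//|j hj|]; rewrite -?ha ?h0 // -hb.
Qed.

End Farkas.

Section Queries.
Variables (R : realType) (n : nat).
Implicit Types (A : linAlg R n) (w : {ffun pairT n -> R}).

Fixpoint queries A w (fuel : nat) (h : seq R) : seq {ffun pairT n -> R} :=
  match la_out A h with
  | Some _ => [::]
  | None => match fuel with
            | 0 => [::]
            | f.+1 => la_query A h :: queries A w f (rcons h (inner (la_query A h) w))
            end
  end.

Lemma size_queries A w fuel h : (size (queries A w fuel h) <= fuel)%N.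
Proof.
elim: fuel h => [|f IH] h /=; case: (la_out A h) => [?|] //=.
by rewrite ltnS; exact: IH.
Qed.

Lemma run_agree A w w' fuel h :
  (forall l, (l < size (queries A w fuel h))%N ->
     inner (nth 0 (queries A w fuel h) l) w' =
     inner (nth 0 (queries A w fuel h) l) w) ->
  run A w' fuel h = run A w fuel h.
Proof.
elim: fuel h => [|f IH] h /=; case: (la_out A h) => [?|] //= hq.
rewrite (hq 0%N erefl); apply: IH => l hl; exact: (hq l.+1 hl).
Qed.

End Queries.

Lemma sum_option (V : nmodType) (T : finType) (F : option T -> V) :
  \sum_o F o = F None + \sum_x F (Some x).
Proof.
rewrite (bigD1 None) //=; congr (_ + _).
by rewrite (reindex_omap Some id) //=; [apply: eq_bigl => x; rewrite eqxx | case].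
Qed.

Section CutCertificates.
Variables (R : realType) (n : nat).

Lemma mincut_le_cut (w : {ffun pairT n -> R}) (X : cutT n) :
  mincut w <= cutw w (val X).
Proof. exact: (bigmin_le _ X (fun X : cutT n => cutw w (val X))). Qed.

Variables (A : linAlg R n) (d : nat) (w : {ffun pairT n -> R}).
Hypothesis solvesA : solves_mincut_within A d.
Hypothesis w_ge0 : forall e, 0 <= w e.

Let t := size (queries A w d [::]).
Let q (l : nat) := nth 0 (queries A w d [::]) l.

Lemma mincut_agree (w' : {ffun pairT n -> R}) : (forall e, 0 <= w' e) ->
  (forall l, (l < t)%N -> inner (q l) w' = inner (q l) w) -> mincut w' = mincut w.
Proof. by move=> w'_ge0 /run_agree; rewrite (solvesA w'_ge0) (solvesA w_ge0) => -[]. Qed.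

(* Otherwise Farkas' lemma yields a
   nonnegative w' agreeing with w on all queries with a cut lighter than c*. *)
Lemma cut_certificate (X : cutT n) : exists lam : nat -> R,
  (forall e, \sum_(l < t) q l e * lam l <= cutvec R (val X) e) /\
  mincut w <= \sum_(l < t) lam l * inner (q l) w.
Proof.
(* Unknowns lam 0, ..., lam (t - 1); constraint Some e is domination at the
   pair e, constraint None is the value bound mincut w <= sum_l lam l <q_l, w>.
   In the infeasible case mu None plays the role of a scaling factor for w'. *)
pose c (o : option (pairT n)) : cstr R := match o with
  | Some e => (fun l => q l e, cutvec R (val X) e)
  | None => (fun l => - inner (q l) w, - mincut w) end.
have [[lam hlam]|[mu [mu_ge0 hcol hrow]]] := farkas c t.
  exists lam; split=> [e|]; first exact: (hlam (Some e)).
  move: (hlam None); rewrite /sat /=.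
  under eq_bigr => l _ do rewrite mulNr mulrC.
  by rewrite sumrN lerN2.
rewrite sum_option /= in hrow.
have cut_ge0 : 0 <= \sum_e mu (Some e) * cutvec R (val X) e.
  by apply: sumr_ge0 => e _; rewrite mulr_ge0.
have [nu0|nu_neq0] := eqVneq (mu None) 0.
  by move: hrow; rewrite nu0 mul0r add0r ltNge cut_ge0.
have nu_gt0 : 0 < mu None by rewrite lt_neqAle eq_sym nu_neq0 mu_ge0.
pose w' := [ffun e => mu (Some e) / mu None].
have sum_w' (F : pairT n -> R) :
    \sum_e F e * w' e = (\sum_e mu (Some e) * F e) / mu None.
  by rewrite mulr_suml; apply: eq_bigr => e _; rewrite ffunE mulrA [F e * _]mulrC.
have hmin : mincut w' = mincut w.
  apply: mincut_agree => [e|l hl]; first by rewrite ffunE divr_ge0.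
  move: (hcol l hl); rewrite sum_option /= mulrN addrC => /eqP.
  rewrite subr_eq0 => /eqP hl_eq.
  by rewrite [LHS]/inner sum_w' hl_eq mulrC mulKf.
have light : cutw w' (val X) < mincut w.
  rewrite /cutw sum_w' ltr_pdivrMr // [_ * mu None]mulrC.
  by move: hrow; rewrite mulrN addrC subr_lt0.
by have := mincut_le_cut w' X; rewrite hmin => /le_lt_trans /(_ light); rewrite ltxx.
Qed.

End CutCertificates.

Lemma sum_pair_index (V : nmodType) n (F : pairT n -> V) :
  \sum_(j < #|{: pairT n}|) F (enum_val j) = \sum_e F e.
Proof. by rewrite -big_enum_val. Qed.

Lemma certificates_approx (R : realType) n (w : {ffun pairT n -> R}) (t : nat)
    (q : nat -> {ffun pairT n -> R}) (lam : cutT n -> nat -> R) :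
  (forall e, 0 <= w e) ->
  (forall X e, \sum_(l < t) q l e * lam X l <= cutvec R (val X) e) ->
  (forall X, mincut w <= \sum_(l < t) lam X l * inner (q l) w) ->
  exists Yt, one_sided_l1_approx (MG R n) Yt (wcol w) (crow w) /\
             (\rank Yt <= t)%N.
Proof.
move=> w_ge0 hdom hval.
pose Lm : 'M[R]_(#|{: cutT n}|, t) := \matrix_(i, l) lam (enum_val i) l.
pose Qm : 'M[R]_(t, #|{: pairT n}|) := \matrix_(l, j) q l (enum_val j).
have entry i j : (Lm *m Qm) i j = \sum_(l < t) q l (enum_val j) * lam (enum_val i) l.
  by rewrite !mxE; apply: eq_bigr => l _; rewrite !mxE mulrC.
have dom i j : (Lm *m Qm) i j <= MG R n i j by rewrite entry mxE hdom.
exists (Lm *m Qm); split; last first.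
  exact: leq_trans (mxrankM_maxr _ _) (rank_leq_row _).
split=> // i; set X := enum_val i.
under eq_bigr => j _ do rewrite ger0_norm ?mulr_ge0 ?subr_ge0 ?w_ge0 // entry mxE.
rewrite (sum_pair_index (fun e => w e * (cutvec R (val X) e -
                                   \sum_(l < t) q l e * lam X l))).
under eq_bigr => e _ do rewrite mulrBr mulr_sumr.
rewrite sumrB exchange_big /= /crow -/X /cutw.
have -> : \sum_(l < t) \sum_e w e * (q l e * lam X l) =
          \sum_(l < t) lam X l * inner (q l) w.
  apply: eq_bigr => l _; rewrite /inner mulr_sumr.
  by apply: eq_bigr => e _; rewrite mulrC [q l e * _]mulrC mulrA.
have -> : \sum_e w e * cutvec R (val X) e = \sum_e cutvec R (val X) e * w e.
  by apply: eq_bigr => e _; rewrite mulrC.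
by have := hval X; lra.
Qed.

Theorem theorem4 (R : realType) (n k : nat) (w : {ffun pairT n -> R}) :
  (forall e, 0 <= w e) ->
  approx_cdim_is w k ->
  Dlin_mincut_ge R n k.
Proof.
move=> w_ge0 [_ k_min] A d solvesA.
have [lam hlam] := choice (cut_certificate solvesA w_ge0).
have [Yt [approx rank_le]] :=
  certificates_approx w_ge0 (fun X => (hlam X).1) (fun X => (hlam X).2).
exact: leq_trans (k_min _ approx) (leq_trans rank_le (size_queries _ _ _ _)).
Qed.
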